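(* Let $X=(X^{(1)},\dots,X^{(p)})\in\mathbb{R}^p$ be a random vector with finite second moments, mean $\mu_X$ and covariance matrix $\Sigma_X$, and let $\epsilon\in\mathbb{R}$ be a random variable with $E(\epsilon)=0$, $\mathrm{var}(\epsilon)=\sigma^2>0$, uncorrelated with $X^{(1)},\dots,X^{(p)}$. Let $Y=\delta+\sum_{j=1}^p\beta_jX^{(j)}+\epsilon$ for some $\delta\in\mathbb{R}$ and $\beta\in\mathbb{R}^p$, and let $\mathcal{A}=\{j:\beta_j\neq 0\}$ with $\mathrm{peff}=|\mathcal{A}|$. Assume (C1) $\Sigma_X$ is strictly positive definite, and (C2) the non-zero coefficients $\{\beta_j; j\in\mathcal{A}\}$ are a realization of a random vector whose distribution on $\mathbb{R}^{\mathrm{peff}}$ has a density $f$ with respect to Lebesgue measure (after realization they are held fixed in the model). Then the distribution of $(X,Y)$ is partially faithful almost surely with respect to the distribution generating the non-zero regression coefficients.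
   Context: For random variables $Z^{(1)},Z^{(2)}$ and a collection $W$ of random variables, $\rho(Z^{(1)},Z^{(2)}\mid W)$ denotes the population partial correlation. For $\mathcal{S}\subseteq\{1,\dots,p\}$, $X^{(\mathcal{S})}=\{X^{(j)};j\in\mathcal{S}\}$ and $\{j\}^C=\{1,\dots,p\}\setminus\{j\}$. The distribution of $(X,Y)$ is called partially faithful if for every $j\in\{1,\dots,p\}$: if $\rho(Y,X^{(j)}\mid X^{(\mathcal{S})})=0$ for some $\mathcal{S}\subseteq\{j\}^C$, then $\rho(Y,X^{(j)}\mid X^{(\{j\}^C)})=0$. *)

From HB Require Import structures.
From mathcomp Require Import all_boot all_order all_algebra.
From mathcomp Require Import all_classical all_reals all_analysis.
Set Implicit Arguments. Unset Strict Implicit. Unset Printing Implicit Defensive.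
Import Order.TTheory GRing.Theory Num.Theory.
Local Open Scope ring_scope.

Definition cov {d} {T : measurableType d} {R : realType}
  (P : probability T R) (Z1 Z2 : T -> R) : R := fine (covariance P Z1 Z2).

Definition covmx {d} {T : measurableType d} {R : realType}
  (P : probability T R) k (W : 'I_k -> T -> R) : 'M[R]_k :=
  \matrix_(i, j) cov P (W i) (W j).

(* Population partial covariance of Z1, Z2 given the family W:
   cov(Z1,Z2) - cov(Z1,W) Sigma_WW^{-1} cov(W,Z2)
   (= covariance of the residuals of the best linear predictions from W). *)
Definition pcov {d} {T : measurableType d} {R : realType}
  (P : probability T R) (Z1 Z2 : T -> R) k (W : 'I_k -> T -> R) : R :=
  cov P Z1 Z2 -
  ((\row_i cov P Z1 (W i)) *m invmx (covmx P W) *m (\col_i cov P (W i) Z2)) 0 0.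

Definition pcorr {d} {T : measurableType d} {R : realType}
  (P : probability T R) (Z1 Z2 : T -> R) k (W : 'I_k -> T -> R) : R :=
  pcov P Z1 Z2 W / Num.sqrt (pcov P Z1 Z1 W * pcov P Z2 Z2 W).

(* X^(S) = {X^(j); j in S}, enumerated in increasing order. *)
Definition Xsub {T : Type} {R : Type} p (X : 'I_p -> T -> R) (S : {set 'I_p})
  : 'I_#|S| -> T -> R := fun i => X (enum_val i).
Arguments Xsub {T R p} X S _ _.

Definition partially_faithful {d} {T : measurableType d} {R : realType}
  (P : probability T R) p (X : 'I_p -> T -> R) (Y : T -> R) : Prop :=
  forall j : 'I_p,
    (exists S : {set 'I_p}, S \subset [set~ j] /\ pcorr P Y (X j) (Xsub X S) = 0) ->
    pcorr P Y (X j) (Xsub X [set~ j]) = 0.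

Definition posdef {R : realType} k (M : 'M[R]_k) : Prop :=
  M^T = M /\ forall v : 'cV[R]_k, v != 0 -> 0 < (v^T *m M *m v) 0 0.

(* Lebesgue integral over R^n (coordinates as n-tuples), written as an
   iterated integral (equal, by Tonelli, to the integral w.r.t. the
   n-dimensional Lebesgue measure for nonnegative measurable integrands). *)
Fixpoint lebesgue_iint {R : realType} (n : nat) : (n.-tuple R -> \bar R) -> \bar R :=
  match n with
  | 0 => fun g => g [tuple]
  | m.+1 => fun g => (\int[@lebesgue_measure R]_x
                        lebesgue_iint (fun t : m.-tuple R => g (cons_tuple x t)))%E
  end.

(* Regression coefficient vector beta in R^p with beta_j = 0 off A and
   (beta_j)_{j in A} given (in increasing order of j) by b. *)
Definition beta_of {R : realType} p (A : {set 'I_p}) (b : #|A|.-tuple R) : 'I_p -> R :=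
  fun j => match [pick i : 'I_#|A| | enum_val i == j] with
           | Some i => tnth b i
           | None => 0
           end.
Arguments beta_of {R p A} b j.

(* Write Sg for the covariance matrix of X and, for S a set of indices,
   M_S = Sg - Sg_{.S} Sg_{SS}^-1 Sg_{S.} for the partial covariance matrix of X
   given X^(S) (pcovmx).  In the linear model cov(Y, X^(j) | X^(S)) is
   sum_k beta_k (M_S)_kj, and the partial variances of X^(j) (j not in S) and of
   Y are positive by (C1) and sigma > 0.  The rows of M_S indexed by S vanish,
   so when beta_j = 0 already cov(Y, X^(j) | X^({j}^C)) = 0.  When beta_j <> 0
   and j is not in S, the partial covariance is a linear form in the random
   coefficients whose coefficient at j is (M_S)_jj > 0; it vanishes only on a
   hyperplane, which is Lebesgue-null and so has probability zero under a
   density.  There are finitely many pairs (j, S). *)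

From HB Require Import structures.
From mathcomp Require Import all_boot all_order all_algebra.
From mathcomp Require Import all_classical all_reals all_analysis.
Import Order.TTheory GRing.Theory Num.Theory.
Local Open Scope ring_scope.
Local Open Scope classical_set_scope.

Section HyperplaneNull.
Variable R : realType.

Lemma lebesgue_iint0 n (g : n.-tuple R -> \bar R) :
  (forall b, g b = 0%E) -> lebesgue_iint g = 0%E.
Proof.
elim: n g => [|n IH] g g0 /=; first exact: g0.
by apply: integral0_eq => x _; apply: IH => t; apply: g0.
Qed.

Lemma integral_eq0_off_point (h : R -> \bar R) (x0 : R) :
  (forall x, x != x0 -> h x = 0%E) -> (\int[lebesgue_measure]_x h x = 0)%E.
Proof.
move=> h0; rewrite -(@integral_setD1 _ h x0 setT).
- by apply: integral0_eq => x [_ /eqP]; apply: h0.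
- exact: measurableD.
- have h0D : {in setT `\ x0, cst 0%E =1 h} by move=> x /set_mem [_ /eqP /h0].
  by eapply eq_measurable_fun; [exact: h0D | exact: measurable_cst].
Qed.

Lemma lebesgue_iint_hyperplane n (c : 'I_n -> R) (e : R)
    (g : n.-tuple R -> \bar R) : (exists i, c i != 0) ->
  lebesgue_iint (fun b => if \sum_i c i * tnth b i + e == 0 then g b else 0%E)
  = 0%E.
Proof.
elim: n c e g => [|n IH] c e g [i ci] /=; first by case: i ci.
have [[i' ci']|c'0] := pselect (exists i', c (lift ord0 i') != 0).
  apply: integral0_eq => x _.
  apply: eq_trans (IH (fun i => c (lift ord0 i)) (c ord0 * x + e)
    (fun t => g (cons_tuple x t)) (ex_intro _ i' ci')).
  congr lebesgue_iint; apply/funext => t.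
  have tnth_lift i0 : tnth (cons_tuple x t) (lift ord0 i0) = tnth t i0.
    exact: tnthS.
  rewrite big_ord_recl tnth0.
  under eq_bigr do rewrite tnth_lift.
  by rewrite (addrC (c ord0 * x)) -addrA.
have {}c'0 i' : c (lift ord0 i') = 0.
  by apply/eqP; apply: contra_notT c'0 => ci'; exists i'.
have c0 : c ord0 != 0.
  by case: (unliftP ord0 i) ci => [i' ->|->] //; rewrite c'0 eqxx.
apply: (@integral_eq0_off_point _ (- e / c ord0)) => x hx.
apply: lebesgue_iint0 => t.
rewrite big_ord_recl tnth0 big1 ?addr0 => [|i' _]; last by rewrite c'0 mul0r.
case: eqP => // /eqP; rewrite addr_eq0 => /eqP ce; case/eqP: hx.
by rewrite -ce mulrC mulKf.
Qed.

End HyperplaneNull.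

Lemma density_negligible_hyperplane {R : realType} {d : measure_display}
    {Omega : measurableType d} {Q : probability Omega R} {m}
    {B : Omega -> m.-tuple R} {f : m.-tuple R -> R} :
  measurable_fun setT B ->
  (forall E, measurable E ->
    Q (B @^-1` E) = lebesgue_iint (fun b => (\1_E b * f b)%:E)) ->
  forall c : 'I_m -> R, (exists i, c i != 0) ->
  Q.-negligible [set w | \sum_i c i * tnth (B w) i = 0].
Proof.
move=> mB hdens c c_neq0.
pose H := [set b : m.-tuple R | \sum_i c i * tnth b i = 0].
have mH : measurable H.
  have mform : measurable_fun setT (fun b : m.-tuple R => \sum_i c i * tnth b i).
    apply: measurable_sum => k; apply: measurable_realfun.measurable_funM => //.
    exact: measurable_tnth.
  by have := mform measurableT _ (measurable_set1 0); rewrite setTI.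
exists (B @^-1` H); split => //; first by have := mB measurableT _ mH; rewrite setTI.
rewrite hdens //.
apply: eq_trans (@lebesgue_iint_hyperplane _ _ c 0 (fun b => (f b)%:E) c_neq0).
congr lebesgue_iint; apply/funext => b; rewrite addr0 indicE.
have -> : (b \in H) = (\sum_i c i * tnth b i == 0) by apply/idP/eqP; rewrite inE.
by case: eqP; rewrite ?mul1r ?mul0r.
Qed.

Section CovarianceL2.
Context {d : measure_display} {T : measurableType d} {R : realType}.
Variable P : probability T R.
Local Notation L2 := (Lfun P 2%:E).

Lemma Lfun2D (X Y : T -> R) : X \in L2 -> Y \in L2 -> (fun t => X t + Y t) \in L2.
Proof. by move=> hX hY; apply: rpredD; rewrite // lee_fin ler1n. Qed.

Lemma Lfun2Z a (X : T -> R) : X \in L2 -> (fun t => a * X t) \in L2.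
Proof.
move=> hX; have -> : (fun t => a * X t) = a \o* X by apply/funext => t; rewrite mulrC.
by apply: Lfun_scale; rewrite // ler1n.
Qed.

Lemma Lfun2_sum m (G : 'I_m -> T -> R) :
  (forall j, G j \in L2) -> (fun t => \sum_(j < m) G j t) \in L2.
Proof.
elim: m G => [|m IH] G hG.
  under eq_fun do rewrite big_ord0; exact: Lfun_cst.
under eq_fun do rewrite big_ord_recr; apply: Lfun2D => //.
exact: (IH (fun j => G (widen_ord (leqnSn m) j))).
Qed.

Lemma covariance_fin (X Y : T -> R) : X \in L2 -> Y \in L2 ->
  covariance P X Y \is a fin_num.
Proof.
move=> hX hY; have Pfin := fin_num_measure P _ measurableT.
by apply: covariance_fin_num; [exact: Lfun_subset12 ..| exact: Lfun2_mul_Lfun1].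
Qed.

Lemma EFin_cov (X Y : T -> R) : X \in L2 -> Y \in L2 ->
  (cov P X Y)%:E = covariance P X Y.
Proof. by move=> hX hY; rewrite fineK // covariance_fin. Qed.

Lemma covC (X Y : T -> R) : cov P X Y = cov P Y X.
Proof. by rewrite /cov covarianceC. Qed.

Lemma cov_cstl c (X : T -> R) : cov P (fun=> c) X = 0.
Proof. by rewrite /cov covariance_cst_l. Qed.

Lemma covDl (X Y Z : T -> R) : X \in L2 -> Y \in L2 -> Z \in L2 ->
  cov P (fun t => X t + Y t) Z = cov P X Z + cov P Y Z.
Proof.
move=> hX hY hZ; apply: EFin_inj.
by rewrite EFinD !EFin_cov ?Lfun2D //; exact: covarianceDl.
Qed.

Lemma covZl a (X Y : T -> R) : X \in L2 -> Y \in L2 ->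
  cov P (fun t => a * X t) Y = a * cov P X Y.
Proof.
move=> hX hY; apply: EFin_inj; have Pfin := fin_num_measure P _ measurableT.
rewrite EFinM !EFin_cov ?Lfun2Z //.
have -> : (fun t => a * X t) = a \o* X by apply/funext => t; rewrite mulrC.
by apply: covarianceZl; [exact: Lfun_subset12 ..| exact: Lfun2_mul_Lfun1].
Qed.

Lemma cov_suml m (G : 'I_m -> T -> R) (Z : T -> R) :
  (forall j, G j \in L2) -> Z \in L2 ->
  cov P (fun t => \sum_(j < m) G j t) Z = \sum_(j < m) cov P (G j) Z.
Proof.
move=> hG hZ; elim: m G hG => [|m IH] G hG.
  by under eq_fun do rewrite big_ord0; rewrite big_ord0 cov_cstl.
under eq_fun do rewrite big_ord_recr.
by rewrite covDl ?Lfun2_sum // ?IH ?big_ord_recr.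
Qed.

End CovarianceL2.

Section PartialCovarianceMatrix.
Context {R : realType} {p k : nat}.
Implicit Types (Sg : 'M[R]_p) (f : 'I_k -> 'I_p) (u : 'cV[R]_p).

Definition sel_mx f : 'M[R]_(k, p) := rowsub f 1%:M.

Definition pcovmx Sg f : 'M[R]_p :=
  Sg - colsub f Sg *m invmx (mxsub f f Sg) *m rowsub f Sg.

Lemma sel_mulmx f m (A : 'M[R]_(p, m)) : sel_mx f *m A = rowsub f A.
Proof. by rewrite rowsubE. Qed.

Lemma mulmx_tr_sel f m (A : 'M[R]_(m, p)) : A *m (sel_mx f)^T = colsub f A.
Proof. by rewrite trmx_mxsub trmx1 mulmx_colsub mulmx1. Qed.

Lemma mxsub_sel Sg f : mxsub f f Sg = sel_mx f *m Sg *m (sel_mx f)^T.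
Proof. by rewrite mulmx_tr_sel sel_mulmx; apply/matrixP => i j; rewrite !mxE. Qed.

Lemma pcovmxE Sg f : pcovmx Sg f =
  Sg - Sg *m (sel_mx f)^T *m invmx (mxsub f f Sg) *m sel_mx f *m Sg.
Proof. by rewrite mulmx_tr_sel -[_ *m sel_mx f *m Sg]mulmxA sel_mulmx. Qed.

Lemma tr_sel_mulmxE f m (w : 'M[R]_(k, m)) j l :
  ((sel_mx f)^T *m w) j l = \sum_i (f i == j)%:R * w i l.
Proof. by rewrite mxE; apply: eq_bigr => i _; rewrite !mxE eq_sym. Qed.

Lemma tr_sel_mulmx_out f m (w : 'M[R]_(k, m)) j l :
  (forall i, f i != j) -> ((sel_mx f)^T *m w) j l = 0.
Proof.
by move=> fj; rewrite tr_sel_mulmxE big1 // => i _; rewrite (negPf (fj i)) mul0r.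
Qed.

Lemma tr_sel_mulmx_inj f m (w : 'M[R]_(k, m)) i l : injective f ->
  ((sel_mx f)^T *m w) (f i) l = w i l.
Proof.
move=> f_inj; rewrite tr_sel_mulmxE (bigD1 i) //= eqxx mul1r big1 ?addr0 //.
by move=> i' /negPf i'i; rewrite (inj_eq f_inj) i'i mul0r.
Qed.

Lemma delta_quadE n (M : 'M[R]_n) (a b : 'I_n) :
  ((delta_mx a 0 : 'cV_n)^T *m M *m (delta_mx b 0 : 'cV_n)) 0 0 = M a b.
Proof. by rewrite trmx_delta -rowE -colE !mxE. Qed.

Lemma posdef_quad_ge0 n (M : 'M[R]_n) (v : 'cV_n) :
  posdef M -> 0 <= (v^T *m M *m v) 0 0.
Proof.
move=> [_ M_pos]; have [->|v_neq0] := eqVneq v 0; last exact/ltW/M_pos.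
by rewrite mulmx0 mxE.
Qed.

Lemma posdef_unitmx n (M : 'M[R]_n) : posdef M -> M \in unitmx.
Proof.
move=> [_ M_pos]; rewrite unitmxE unitfE; apply/det0P => -[v v_neq0 vM0].
have vT_neq0 : v^T != 0 by rewrite trmx_eq0.
by have := M_pos _ vT_neq0; rewrite trmxK vM0 mul0mx mxE ltxx.
Qed.

Lemma posdef_mxsub Sg f : injective f -> posdef Sg -> posdef (mxsub f f Sg).
Proof.
move=> f_inj [Sg_sym Sg_pos]; split; first by rewrite trmx_mxsub Sg_sym.
move=> v /matrix0Pn [i [l vi_neq0]].
have u_neq0 : (sel_mx f)^T *m v != 0.
  by apply/matrix0Pn; exists (f i), l; rewrite tr_sel_mulmx_inj.
by have := Sg_pos _ u_neq0; rewrite mxsub_sel trmx_mul trmxK !mulmxA.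
Qed.

Section Posdef.
Context {Sg : 'M[R]_p} {f : 'I_k -> 'I_p}.
Hypotheses (Sg_posdef : posdef Sg) (f_inj : injective f).

Let G_unit : mxsub f f Sg \in unitmx.
Proof. exact/posdef_unitmx/posdef_mxsub. Qed.

(* The residual of u after Sg-orthogonal projection onto the coordinates in
   the image of f. *)
Definition resid (u : 'cV[R]_p) : 'cV[R]_p :=
  u - (sel_mx f)^T *m (invmx (mxsub f f Sg) *m rowsub f (Sg *m u)).

Lemma pcovmx_quadE u : u^T *m pcovmx Sg f *m u = (resid u)^T *m Sg *m resid u.
Proof.
rewrite /resid -sel_mulmx mulmxA; set E := sel_mx f.
set G := mxsub f f Sg; set w := invmx G *m _.
have GwE : w^T *m E *m Sg *m E^T *m w = w^T *m E *m Sg *m u.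
  have Gw : E *m Sg *m E^T *m w = E *m Sg *m u.
    by rewrite /w -mxsub_sel -/G mulKVmx.
  by have := congr1 (mulmx w^T) Gw; rewrite !mulmxA.
have wE : u^T *m Sg *m E^T *m invmx G *m E *m Sg *m u = u^T *m Sg *m E^T *m w.
  by rewrite /w !mulmxA.
clearbody w.
rewrite (raddfB (@trmx R p 1)) /= trmx_mul trmxK pcovmxE -/E -/G.
by rewrite !mulmxBl !mulmxBr mulmxBl !mulmxA GwE wE subrr subr0.
Qed.

Lemma pcovmx_quad_ge0 u : 0 <= (u^T *m pcovmx Sg f *m u) 0 0.
Proof. by rewrite pcovmx_quadE; exact: posdef_quad_ge0. Qed.

Lemma pcovmx_diag_gt0 j : (forall i, f i != j) -> 0 < pcovmx Sg f j j.
Proof.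
move=> fj; rewrite -delta_quadE pcovmx_quadE; apply: Sg_posdef.2.
apply/matrix0Pn; exists j, 0.
by rewrite /resid 3!mxE tr_sel_mulmx_out // oppr0 addr0 !eqxx oner_eq0.
Qed.

Lemma pcovmx_row0 i j : pcovmx Sg f (f i) j = 0.
Proof.
have : sel_mx f *m pcovmx Sg f = 0.
  by rewrite pcovmxE mulmxBr !mulmxA -mxsub_sel mulmxV // mul1mx subrr.
by move/matrixP/(_ i j); rewrite sel_mulmx !mxE.
Qed.

End Posdef.
End PartialCovarianceMatrix.

Section BetaOf.
Variables (R : realType) (p : nat) (A : {set 'I_p}) (b : #|A|.-tuple R).

Lemma beta_of_notin k : k \notin A -> beta_of b k = 0.
Proof.
move=> kA; rewrite /beta_of; case: pickP => // i /eqP ik.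
by move: kA; rewrite -ik enum_valP.
Qed.

Lemma beta_of_enum_val i : beta_of b (enum_val i) = tnth b i.
Proof.
rewrite /beta_of; case: pickP => [i' /eqP /enum_val_inj -> //|/(_ i)].
by rewrite eqxx.
Qed.

Lemma sum_beta_of (F : 'I_p -> R) :
  \sum_k beta_of b k * F k = \sum_(i < #|A|) F (enum_val i) * tnth b i.
Proof.
rewrite (bigID (mem A)) /= [X in _ + X]big1 ?addr0 => [|k kA]; last first.
  by rewrite beta_of_notin // mul0r.
rewrite (big_enum_val (fun k => beta_of b k * F k)).
by apply: eq_bigr => i _; rewrite beta_of_enum_val mulrC.
Qed.

End BetaOf.

Section LinearModel.
Context {d : measure_display} {T : measurableType d} {R : realType}.
Context {P : probability T R} {p : nat} {X : 'I_p -> T -> R} {eps : T -> R}.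
Hypotheses (X_L2 : forall j, X j \in Lfun P 2%:E) (eps_L2 : eps \in Lfun P 2%:E).
Hypothesis eps_X_uncorr : forall j, covariance P eps (X j) = 0%E.
Local Notation Sg := (covmx P X).

Lemma pcovE {k} (f : 'I_k -> 'I_p) Z1 Z2 (u v : 'cV_p) :
    (forall l, cov P Z1 (X l) = (u^T *m Sg) 0 l) ->
    (forall l, cov P (X l) Z2 = (Sg *m v) l 0) ->
  pcov P Z1 Z2 (fun i => X (f i)) =
    cov P Z1 Z2 - (u^T *m Sg *m v) 0 0 + (u^T *m pcovmx Sg f *m v) 0 0.
Proof.
move=> Z1X XZ2; rewrite /pcov.
have -> : covmx P (fun i => X (f i)) = mxsub f f Sg.
  by apply/matrixP => i j; rewrite !mxE.
have -> : \row_i cov P Z1 (X (f i)) = colsub f (u^T *m Sg).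
  by apply/matrixP => i j; rewrite [LHS]mxE [RHS]mxE (ord1 i) Z1X.
have -> : \col_i cov P (X (f i)) Z2 = rowsub f (Sg *m v).
  by apply/matrixP => i j; rewrite [LHS]mxE [RHS]mxE (ord1 j) XZ2.
rewrite -mulmx_colsub -mulmxA -mul_rowsub_mx /pcovmx mulmxBr mulmxBl !mulmxA.
have entryB (M N : 'M[R]_1) : (M - N) 0 0 = M 0 0 - N 0 0 by rewrite !mxE.
by rewrite entryB addrA subrK.
Qed.

Lemma pcov_XX {k} (f : 'I_k -> 'I_p) j :
  pcov P (X j) (X j) (fun i => X (f i)) = pcovmx Sg f j j.
Proof.
rewrite (pcovE f _ _ (delta_mx j 0) (delta_mx j 0)) => [|l|l].
- by rewrite !delta_quadE mxE subrr add0r.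
- by rewrite trmx_delta -rowE !mxE.
- by rewrite -colE !mxE.
Qed.

Context {delta : R} {beta : 'I_p -> R}.

Definition lin_model t := delta + \sum_(j < p) beta j * X j t + eps t.

Local Notation Y := lin_model.
Local Notation b := (\col_l beta l : 'cV_p).

Lemma Lfun2_lin_model : Y \in Lfun P 2%:E.
Proof.
by apply/Lfun2D/eps_L2/Lfun2D; [exact: Lfun_cst | apply: Lfun2_sum => j; exact: Lfun2Z].
Qed.

Lemma cov_lin_modell Z : Z \in Lfun P 2%:E ->
  cov P Y Z = \sum_k beta k * cov P (X k) Z + cov P eps Z.
Proof.
move=> Z_L2; have sum_L2 : (fun t => \sum_(j < p) beta j * X j t) \in Lfun P 2%:E.
  by apply: Lfun2_sum => j; exact: Lfun2Z.
rewrite covDl ?Lfun2D ?covDl ?cov_cstl ?add0r //; try exact: Lfun_cst.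
rewrite cov_suml // => [|j]; last exact: Lfun2Z.
by congr (_ + _); apply: eq_bigr => k _; rewrite covZl.
Qed.

Lemma cov_lin_model_X l : cov P Y (X l) = \sum_k beta k * Sg k l.
Proof.
rewrite cov_lin_modell // /cov eps_X_uncorr addr0.
by apply: eq_bigr => k _; rewrite mxE.
Qed.

Lemma pcov_lin_model_X {k} (f : 'I_k -> 'I_p) j :
  pcov P Y (X j) (fun i => X (f i)) = \sum_l beta l * pcovmx Sg f l j.
Proof.
have bTE (M : 'M[R]_p) l : (b^T *m M) 0 l = \sum_i beta i * M i l.
  by rewrite mxE; apply: eq_bigr => i _; rewrite !mxE.
rewrite (pcovE f _ _ b (delta_mx j 0)) => [|l|l].
- by rewrite -colE mxE bTE cov_lin_model_X subrr add0r -colE mxE bTE.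
- by rewrite bTE cov_lin_model_X.
- by rewrite -colE mxE mxE.
Qed.

Context {sigma : R}.
Hypothesis eps_var : 'V_P[eps] = (sigma ^+ 2)%:E.

Lemma pcov_lin_model_self {k} (f : 'I_k -> 'I_p) :
  pcov P Y Y (fun i => X (f i)) = (b^T *m pcovmx Sg f *m b) 0 0 + sigma ^+ 2.
Proof.
have XY l : cov P (X l) Y = (Sg *m b) l 0.
  rewrite covC cov_lin_model_X mxE.
  by apply: eq_bigr => i _; rewrite !mxE covC mulrC.
have epsY : cov P eps Y = sigma ^+ 2.
  rewrite covC cov_lin_modell // big1 ?add0r => [|i _].
    by rewrite /cov -/(variance P eps) eps_var.
  by rewrite covC /cov eps_X_uncorr mulr0.
have YY : cov P Y Y = (b^T *m Sg *m b) 0 0 + sigma ^+ 2.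
  rewrite cov_lin_modell ?Lfun2_lin_model // epsY -mulmxA mxE.
  by congr (_ + _); apply: eq_bigr => i _; rewrite XY !mxE.
rewrite (pcovE f _ _ b b) => [|l|l]; last exact: XY.
- by rewrite YY [_ + sigma ^+ 2]addrC addrK addrC.
- rewrite cov_lin_model_X mxE.
  by apply: eq_bigr => i _; rewrite !mxE.
Qed.

Hypothesis Sg_posdef : posdef Sg.

Lemma pcorr_lin_model_X_eq0 {k} {f : 'I_k -> 'I_p} {j} : injective f ->
    beta j = 0 -> (forall l, l != j -> exists i, f i = l) ->
  pcorr P Y (X j) (fun i => X (f i)) = 0.
Proof.
move=> f_inj beta_j f_onto; rewrite /pcorr pcov_lin_model_X big1 ?mul0r // => l _.
have [->|/f_onto [i <-]] := eqVneq l j; first by rewrite beta_j mul0r.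
by rewrite pcovmx_row0 // mulr0.
Qed.

Lemma pcorr_lin_model_X_neq0 {k} {f : 'I_k -> 'I_p} {j} : injective f ->
    0 < sigma -> (forall i, f i != j) -> \sum_l beta l * pcovmx Sg f l j != 0 ->
  pcorr P Y (X j) (fun i => X (f i)) != 0.
Proof.
move=> f_inj sigma_gt0 fj pcovYX_neq0.
rewrite /pcorr pcov_lin_model_X mulf_neq0 // invr_neq0 // gt_eqF // sqrtr_gt0.
rewrite pcov_lin_model_self pcov_XX mulr_gt0 ?pcovmx_diag_gt0 //.
by rewrite ltr_wpDl ?pcovmx_quad_ge0 ?exprn_gt0.
Qed.

End LinearModel.

Lemma enum_val_neq {T : finType} {S : {set T}} {j} (i : 'I_#|S|) :
  j \notin S -> enum_val i != j.
Proof. by move=> jS; apply: contraNneq jS => <-; exact: enum_valP. Qed.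

Lemma ae_pcovmx_beta_of_neq0 {R : realType} {p} {Sg : 'M[R]_p} {A : {set 'I_p}}
    {d : measure_display} {Omega : measurableType d} {Q : probability Omega R}
    {B : Omega -> #|A|.-tuple R} {f : #|A|.-tuple R -> R} :
  posdef Sg -> measurable_fun setT B ->
  (forall E, measurable E ->
    Q (B @^-1` E) = lebesgue_iint (fun b => (\1_E b * f b)%:E)) ->
  {ae Q, forall w (j : 'I_p) (S : {set 'I_p}), j \in A -> j \notin S ->
     \sum_l beta_of (B w) l * pcovmx Sg (enum_val : 'I_#|S| -> 'I_p) l j != 0}.
Proof.
move=> Sg_posdef mB hdens; apply: filter_forall => j; apply: filter_forall => S.
have [jA|jA] := boolP (j \in A); last by apply: nearW => w.
have [jS|jS] := boolP (j \in S); first by apply: nearW => w.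
pose c (i : 'I_#|A|) := pcovmx Sg (enum_val : 'I_#|S| -> 'I_p) (enum_val i) j.
have c_neq0 : exists i, c i != 0.
  exists (enum_rank_in jA j); rewrite /c enum_rankK_in // gt_eqF //.
  by apply: pcovmx_diag_gt0 => // [|i]; [exact: enum_val_inj | exact: enum_val_neq].
apply: negligibleS (density_negligible_hyperplane mB hdens _ c_neq0) => w /= hw.
apply/eqP; apply: contra_notT hw => sum_neq0 _ _.
by rewrite sum_beta_of.
Qed.

Theorem theorem1 (R : realType)
  (d : measure_display) (T : measurableType d) (P : probability T R)
  (p : nat) (X : 'I_p -> T -> R) (eps : T -> R)
  (hX2 : forall j, X j \in Lfun P 2%:E)
  (heps2 : eps \in Lfun P 2%:E)
  (heps0 : ('E_P[eps] = 0)%E)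
  (sigma : R) (hsigma : 0 < sigma)
  (hvar : ('V_P[eps] = (sigma ^+ 2)%:E)%E)
  (huncorr : forall j, covariance P eps (X j) = 0%E)
  (delta : R)
  (hC1 : posdef (covmx P X))
  (A : {set 'I_p})
  (d' : measure_display) (Omega : measurableType d') (Q : probability Omega R)
  (B : Omega -> #|A|.-tuple R) (hB : measurable_fun setT B)
  (f : #|A|.-tuple R -> R) (hf0 : forall b, 0 <= f b) (hfm : measurable_fun setT f)
  (hdens : forall E : set (#|A|.-tuple R), measurable E ->
      Q (B @^-1` E) = lebesgue_iint (fun b => (\1_E b * f b)%:E)) :
  {ae Q, forall w : Omega,
     partially_faithful P X
       (fun t => delta + \sum_(j < p) beta_of (B w) j * X j t + eps t)}.
Proof.
apply: filterS (ae_pcovmx_beta_of_neq0 hC1 hB hdens) => w beta_generic j.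
have [jA|jA] := boolP (j \in A).
  move=> [S [/fintype.subsetP Sj /eqP]]; apply: contraTeq => _.
  have jS : j \notin S by apply/negP => /Sj; rewrite !inE eqxx.
  exact: (pcorr_lin_model_X_neq0 hX2 heps2 huncorr hvar hC1 enum_val_inj hsigma
    (fun i => enum_val_neq i jS) (beta_generic j S jA jS)).
move=> _; apply: (pcorr_lin_model_X_eq0 hX2 heps2 huncorr hC1).
- exact: enum_val_inj.
- exact: beta_of_notin.
- move=> l lj; have lS : l \in [set~ j]%SET by rewrite !inE.
  by exists (enum_rank_in lS l); rewrite enum_rankK_in.
Qed.
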